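(* Let $d\geq 3$. Let $\mathcal{H}_A=\mathbb{C}^2\otimes\mathbb{C}^d$ and $\mathcal{H}_B=\mathbb{C}^2\otimes\mathbb{C}^d$, and regard $\mathcal{H}_A\otimes\mathcal{H}_B$ as $(\mathbb{C}^2\otimes\mathbb{C}^2)\otimes(\mathbb{C}^d\otimes\mathbb{C}^d)$, where the first pair consists of the qubit factors of Alice and Bob and the second pair of the qudit factors. For $x,y,z\geq 0$ let $$\rho=\tilde Q_2\otimes\tilde Q+x\,P_2\otimes\tilde Q+y\,\tilde Q_2\otimes P+z\,P_2\otimes P.$$ If $z>\frac{2x}{d-2}$, then $\rho$ is entangled (not separable) with respect to the split $\mathcal{H}_A|\mathcal{H}_B$.
   Context: $P_2=|\Phi_2\rangle\langle\Phi_2|$ with $|\Phi_2\rangle=\frac{1}{\sqrt2}(|00\rangle+|11\rangle)\in\mathbb{C}^2\otimes\mathbb{C}^2$, and $\tilde Q_2=(\mathbb{1}-P_2)/3$. $P=|\Phi_d\rangle\langle\Phi_d|$ with $|\Phi_d\rangle=\frac{1}{\sqrt d}\sum_{i=0}^{d-1}|ii\rangle\in\mathbb{C}^d\otimes\mathbb{C}^d$, and $\tilde Q=(\mathbb{1}-P)/(d^2-1)$. A positive semidefinite operator is separable if it is a nonnegative combination of product operators $\rho^A\otimes\rho^B$ with $\rho^A,\rho^B\geq 0$. *)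

(* Complex scalars: an arbitrary numClosedFieldType C
   (e.g. algC, or R[i] for a real closed field R), with Num.conj as complex
   conjugation and the partial order 0 <= z <-> z real nonnegative. *)
From HB Require Import structures.
From mathcomp Require Import all_boot all_order all_algebra.
Unset Printing Implicit Defensive.
Import Order.TTheory GRing.Theory Num.Theory.
Local Open Scope ring_scope.

Definition op (C : numClosedFieldType) (I : finType) := I -> I -> C.

Definition psd (C : numClosedFieldType) (I : finType) (M : op C I) : Prop :=
  forall v : I -> C, 0 <= \sum_(i : I) \sum_(j : I) (v i)^* * M i j * v j.

Definition kron (C : numClosedFieldType) (I J : finType) (M : op C I) (N : op C J)
  : op C (I * J)%type := fun p q => M p.1 q.1 * N p.2 q.2.

Definition separable (C : numClosedFieldType) (I J : finType) (M : op C (I * J)%type)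
  : Prop :=
  exists (n : nat) (c : 'I_n -> C) (A : 'I_n -> op C I) (B : 'I_n -> op C J),
    (forall k, 0 <= c k /\ psd C I (A k) /\ psd C J (B k)) /\
    (forall p q, M p q = \sum_(k < n) c k * kron _ _ _ (A k) (B k) p q).

Definition idop (C : numClosedFieldType) (I : finType) : op C I :=
  fun i j => (i == j)%:R.

(* projector onto the maximally entangled state (1/sqrt n) sum_i |ii> on C^n (x) C^n *)
Definition Pmax (C : numClosedFieldType) (n : nat) : op C ('I_n * 'I_n)%type :=
  fun p q => (p.1 == p.2)%:R * (q.1 == q.2)%:R / n%:R.

Definition Qtil (C : numClosedFieldType) (n : nat) : op C ('I_n * 'I_n)%type :=
  fun p q => (@idop C _ p q - Pmax C n p q) / (n%:R ^+ 2 - 1).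

(* rho on (C^2 (x) C^2) (x) (C^d (x) C^d) (qubits of A,B ; qudits of A,B) *)
Definition rho_qq (C : numClosedFieldType) (d : nat) (x y z : C)
  : op C (('I_2 * 'I_2) * ('I_d * 'I_d))%type :=
  fun p q =>
    kron _ _ _ (Qtil C 2) (Qtil C d) p q + x * kron _ _ _ (Pmax C 2) (Qtil C d) p q
    + y * kron _ _ _ (Qtil C 2) (Pmax C d) p q + z * kron _ _ _ (Pmax C 2) (Pmax C d) p q.

(* the same operator, reordered to H_A (x) H_B with H_A = H_B = C^2 (x) C^d *)
Definition rho_AB (C : numClosedFieldType) (d : nat) (x y z : C)
  : op C (('I_2 * 'I_d) * ('I_2 * 'I_d))%type :=
  fun p q => rho_qq C d x y z ((p.1.1, p.2.1), (p.1.2, p.2.2))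
                           ((q.1.1, q.2.1), (q.1.2, q.2.2)).

(* The operator W = P_2 (x) (1 - (d/2) P), read in the qubit|qudit order, is an
   entanglement witness.  On a product vector u (x) w of H_A (x) H_B the value
   2 <u w|W|u w> equals ||A||_F^2 - |tr A|^2 / 2 for the d x d matrix
   A_ij = sum_s u(s,i) w(s,j), which has rank at most 2, and |tr A|^2 <= rank A ||A||_F^2.
   Every psd operator is a sum of rank-one projectors, so Tr(W sigma) >= 0 for every
   separable sigma, whereas 2 Tr(W rho) = 2x + (2 - d) z < 0 once z > 2x/(d-2). *)

From HB Require Import structures.
From mathcomp Require Import all_boot all_order all_algebra.
From mathcomp Require Import ring.
Import Order.TTheory GRing.Theory Num.Theory.
Local Open Scope ring_scope.
Local Open Scope sesquilinear_scope.

Lemma sum_mul_delta (R : pzSemiRingType) (I : finType) (F : I -> R) k :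
  \sum_j F j * (j == k)%:R = F k.
Proof.
rewrite (bigD1 k) //= eqxx mulr1 big1 ?addr0 // => j /negbTE ->.
by rewrite mulr0.
Qed.

Lemma sum_enum_val (V : nmodType) (I : finType) (F : I -> V) :
  \sum_(p : I) F p = \sum_(i < #|I|) F (enum_val i).
Proof.
rewrite (reindex (fun i : 'I_#|I| => enum_val i)) //.
by exists enum_rank => ? _; [exact: enum_valK | exact: enum_rankK].
Qed.

Lemma sqr_normC_sum (C : numClosedFieldType) (I : finType) (f : I -> C) :
  `|\sum_i f i| ^+ 2 = \sum_(s : (I * I)%type) f s.1 * (f s.2)^*.
Proof. by rewrite normCK rmorph_sum big_distrlr pair_big. Qed.

Section TraceBound.
Variable C : numClosedFieldType.

Lemma sqr_normCD_le (s t : C) : `|s + t| ^+ 2 <= 2 * (`|s| ^+ 2 + `|t| ^+ 2).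
Proof.
rewrite -subr_ge0 (_ : _ - _ = `|s - t| ^+ 2) ?exprn_ge0 //.
by rewrite !normCK !(rmorphD, rmorphN); ring.
Qed.

Lemma cauchy_schwarz_sum n (a b : 'I_n -> C) :
  `|\sum_i a i * b i| ^+ 2 <= (\sum_i `|a i| ^+ 2) * (\sum_i `|b i| ^+ 2).
Proof.
have dotE (u v : 'I_n -> C) :
    dotmx (\row_i u i) (\row_i v i) = \sum_i u i * (v i)^*.
  by rewrite dotmxE mxE; apply: eq_bigr => i _; rewrite !mxE.
have normE (u : 'I_n -> C) : dotmx (\row_i u i) (\row_i u i) = \sum_i `|u i| ^+ 2.
  by rewrite dotE; apply: eq_bigr => i _; rewrite normCK.
have := (CauchySchwarz (@dotmx C n) (\row_i a i) (\row_i (b i)^*)).1.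
rewrite /= !normE dotE.
under [X in `|X| ^+ 2 <= _ -> _]eq_bigr do rewrite conjCK.
by under [X in _ <= _ * X -> _]eq_bigr do rewrite norm_conjC.
Qed.

Variables (n : nat) (A : 'I_n -> 'I_n -> C).

Lemma trace_rank2_le_orth {x0 x1 y0 y1 : 'I_n -> C} :
  (forall i j, A i j = x0 i * y0 j + x1 i * y1 j) ->
  \sum_i x0 i * (x1 i)^* = 0 ->
  `|\sum_i A i i| ^+ 2 <= 2 * \sum_i \sum_j `|A i j| ^+ 2.
Proof.
move=> defA x01.
have x10 : \sum_i x1 i * (x0 i)^* = 0.
  transitivity ((\sum_i x0 i * (x1 i)^*)^*); last by rewrite x01 conjC0.
  by rewrite rmorph_sum; apply: eq_bigr => i _; rewrite rmorphM /= conjCK mulrC.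
have frobA : \sum_i \sum_j `|A i j| ^+ 2 =
    (\sum_i `|x0 i| ^+ 2) * (\sum_j `|y0 j| ^+ 2) +
    (\sum_i `|x1 i| ^+ 2) * (\sum_j `|y1 j| ^+ 2).
  have expandA i j : `|A i j| ^+ 2 =
      `|x0 i| ^+ 2 * `|y0 j| ^+ 2 + `|x1 i| ^+ 2 * `|y1 j| ^+ 2 +
      x0 i * (x1 i)^* * (y0 j * (y1 j)^*) + x1 i * (x0 i)^* * (y1 j * (y0 j)^*).
    by rewrite defA !normCK !(rmorphD, rmorphM); ring.
  under eq_bigr do under eq_bigr do rewrite expandA.
  under eq_bigr do rewrite !big_split /=.
  by rewrite !big_split /= -!big_distrlr /= x01 x10 !mul0r !addr0.
rewrite frobA; under eq_bigr do rewrite defA; rewrite big_split /=.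
apply: le_trans (sqr_normCD_le _ _) _.
by rewrite ler_wpM2l // lerD // cauchy_schwarz_sum.
Qed.

Lemma trace_rank2_le (x0 x1 y0 y1 : 'I_n -> C) :
  (forall i j, A i j = x0 i * y0 j + x1 i * y1 j) ->
  `|\sum_i A i i| ^+ 2 <= 2 * \sum_i \sum_j `|A i j| ^+ 2.
Proof.
move=> defA; set a := \sum_i `|x0 i| ^+ 2.
have [a0 | a_neq0] := eqVneq a 0.
  apply: (trace_rank2_le_orth defA); apply: big1 => i _.
  have /eqP : `|x0 i| ^+ 2 = 0 by apply: (psumr_eq0P _ a0) => // j _; exact: exprn_ge0.
  by rewrite sqrf_eq0 normr_eq0 => /eqP->; rewrite mul0r.
(* Gram-Schmidt: subtracting c x0 from x1 and adding c y1 to y0 leaves A unchanged. *)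
pose c := (\sum_i x1 i * (x0 i)^*) / a.
apply: (trace_rank2_le_orth (x0 := x0) (x1 := fun i => x1 i - c * x0 i)
                            (y0 := fun j => y0 j + c * y1 j) (y1 := y1)).
  by move=> i j; rewrite defA; ring.
have a_real : a^* = a by apply/geC0_conj/sumr_ge0 => i _; exact: exprn_ge0.
under eq_bigr do rewrite rmorphB rmorphM /= mulrBr.
rewrite sumrB (_ : \sum_i x0 i * (c^* * (x0 i)^*) = c^* * a); last first.
  by rewrite mulr_sumr; apply: eq_bigr => i _; rewrite normCK; ring.
rewrite /c rmorphM /= fmorphV /= a_real divfK // rmorph_sum.
apply/eqP; rewrite subr_eq0; apply/eqP/eq_bigr => i _.
by rewrite rmorphM /= conjCK mulrC.
Qed.

End TraceBound.

Section Psd.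
Variables (C : numClosedFieldType) (I : finType).

Lemma form_delta2 (A : op C I) (k l : I) (c : C) :
  \sum_i \sum_j ((i == k)%:R + c * (i == l)%:R)^* * A i j * ((j == k)%:R + c * (j == l)%:R)
  = A k k + c * A k l + c^* * A l k + c^* * c * A l l.
Proof.
pose e (k i : I) : C := (i == k)%:R.
transitivity (\sum_i (A i k + c * A i l) * (e k i + c^* * e l i)).
  apply: eq_bigr => i _.
  rewrite (eq_bigr (fun j => (e k i + c^* * e l i) * A i j * e k j +
                            c * ((e k i + c^* * e l i) * A i j * e l j))).
    by rewrite big_split /= -mulr_sumr !sum_mul_delta; ring.
  by move=> j _; rewrite rmorphD rmorphM /= !rmorph_nat; ring.
under eq_bigr do rewrite mulrDr mulrCA.
by rewrite big_split /= -mulr_sumr !sum_mul_delta; ring.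
Qed.

Lemma psd_hermitian {A : op C I} : psd C I A -> forall p q, A q p = (A p q)^*.
Proof.
move=> psdA p q; set s := A p q; set t := A q p.
have real_form k l c :
    A k k + c * A k l + c^* * A l k + c^* * c * A l l \is Num.real.
  by rewrite -form_delta2; apply/ger0_real/psdA.
have conj_cross c : (c * s + c^* * t)^* = c * s + c^* * t.
  have Ap := real_form p q 0; have Aq := real_form q p 0.
  rewrite rmorph0 !mul0r !addr0 in Ap Aq.
  have cc : c^* * c \is Num.real by rewrite -normCKC realX ?normr_real.
  have := rpredB (rpredB (real_form p q c) Ap) (rpredM cc Aq).
  rewrite (_ : A p p + c * s + c^* * t + c^* * c * A q q - A p p - c^* * c * A q q
              = c * s + c^* * t); [by move/CrealP | ring].
have e1 : s^* + t^* = s + t.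
  by have := conj_cross 1; rewrite conjC1 !mul1r rmorphD.
have e2 : t^* - s^* = s - t.
  apply: (mulfI (neq0Ci C)); have := conj_cross 'i.
  rewrite rmorphD !rmorphM /= conjCK !conjCi => conj_i.
  by transitivity (- 'i * s^* + 'i * t^*); [ring | rewrite conj_i; ring].
have two_neq0 : (2 : C) != 0 by rewrite pnatr_eq0.
apply: (mulfI two_neq0); symmetry.
by transitivity ((s^* + t^*) - (t^* - s^*)); [ring | rewrite e1 e2; ring].
Qed.

Lemma psd_enum {A : op C I} :
  psd C I A -> psd C 'I_#|I| (fun i j => A (enum_val i) (enum_val j)).
Proof.
move=> psdA w; apply: le_trans (psdA (fun p => w (enum_rank p))) _.
rewrite sum_enum_val; under eq_bigr do rewrite sum_enum_val.
by under eq_bigr do under eq_bigr do rewrite !enum_valK.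
Qed.

Lemma psd_rank1_decomp (A : op C I) : psd C I A ->
  exists n (u : 'I_n -> I -> C), forall p q, A p q = \sum_k u k p * (u k q)^*.
Proof.
move=> psdA.
pose M : 'M[C]_#|I| := \matrix_(i, j) A (enum_val i) (enum_val j).
have M_herm : M \is hermsymmx.
  apply/is_hermitianmxP; rewrite expr0 scale1r; apply/matrixP => i j.
  by rewrite !mxE (psd_hermitian psdA).
set P := spectralmx M; set D := spectral_diag M.
have P_unitary : P \is unitarymx := spectral_unitarymx M.
have defM : M = P^t* *m diag_mx D *m P.
  have := orthomx_spectralP (hermitian_normalmx M_herm).
  by rewrite invmx_unitary.
have D_ge0 k : 0 <= D 0 k.
  have PPt : P *m P^t* = 1%:M by apply/unitarymxP.
  have -> : D 0 k = (P *m M *m P^t*) k k.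
    by rewrite defM !mulmxA PPt mul1mx -mulmxA PPt mulmx1 mxE eqxx mulr1n.
  apply: le_trans (psd_enum psdA (fun j => (P k j)^*)) _.
  rewrite mxE; under [X in _ <= X]eq_bigr do rewrite !mxE mulr_suml.
  rewrite [X in _ <= X]exchange_big /=.
  under [X in _ <= X]eq_bigr do under eq_bigr do rewrite /M mxE.
  by under eq_bigr do under eq_bigr do rewrite conjCK.
pose u k p := sqrtC (D 0 k) * (P k (enum_rank p))^*.
exists #|I|, u => p q.
have -> : A p q = M (enum_rank p) (enum_rank q) by rewrite mxE !enum_rankK.
rewrite defM mxE; apply: eq_bigr => k _; rewrite mul_mx_diag !mxE /u.
have sqrtD_real : (sqrtC (D 0 k))^* = sqrtC (D 0 k) by rewrite geC0_conj ?sqrtC_ge0.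
by rewrite rmorphM /= conjCK sqrtD_real mulrACA -expr2 sqrtCK; ring.
Qed.

End Psd.

Section MaxEntangled.
Context {C : numClosedFieldType}.

Definition optrace {I : finType} (X : op C I) : C := \sum_p X p p.

(* [maxent_form X = n <Phi_n|X|Phi_n>] *)
Definition maxent_form {n} (X : op C ('I_n * 'I_n)%type) : C :=
  \sum_(s : ('I_n * 'I_n)%type) X (s.1, s.1) (s.2, s.2).

Variable n : nat.

Lemma sum_pair_eq : \sum_(s : ('I_n * 'I_n)%type) (s.1 == s.2)%:R = n%:R :> C.
Proof.
rewrite -(pair_big xpredT xpredT (fun i j => (i == j)%:R)) /=.
under eq_bigr => i _ do under eq_bigr => j _ do rewrite eq_sym -[_%:R]mul1r.
by under eq_bigr do rewrite sum_mul_delta; rewrite sumr_const card_ord.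
Qed.

Lemma optrace_Pmax : (0 < n)%N -> optrace (Pmax C n) = 1.
Proof.
move=> n_gt0; rewrite /optrace /Pmax.
under eq_bigr do rewrite -natrM mulnb andbb.
by rewrite -mulr_suml sum_pair_eq divff // pnatr_eq0 -lt0n.
Qed.

Lemma maxent_form_Pmax : (0 < n)%N -> maxent_form (Pmax C n) = n%:R.
Proof.
move=> n_gt0; rewrite /maxent_form (eq_bigr (fun=> n%:R^-1)) => [|s _]; last first.
  by rewrite /Pmax /= !eqxx mulr1n !mul1r.
rewrite sumr_const card_prod !card_ord -[_ *+ (n * n)]mulr_natr natrM mulKf //.
by rewrite pnatr_eq0 -lt0n.
Qed.

Lemma optrace_Qtil : (1 < n)%N -> optrace (Qtil C n) = 1.
Proof.
move=> n_gt1; rewrite /optrace /Qtil -mulr_suml sumrB.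
rewrite -/(optrace (Pmax C n)) optrace_Pmax 1?ltnW //.
rewrite /idop; under eq_bigr do rewrite eqxx.
rewrite sumr_const card_prod !card_ord mulr1n natrM -expr2 divff //.
by rewrite subr_eq0 expr2 -natrM pnatr_eq1 muln_eq1 andbb (gtn_eqF n_gt1).
Qed.

Lemma maxent_form_Qtil : (1 < n)%N -> maxent_form (Qtil C n) = 0.
Proof.
move=> n_gt1; rewrite /maxent_form /Qtil -mulr_suml sumrB.
rewrite -/(maxent_form (Pmax C n)) maxent_form_Pmax 1?ltnW // /idop.
under eq_bigr do rewrite xpair_eqE andbb.
by rewrite sum_pair_eq subrr mul0r.
Qed.

End MaxEntangled.

Section Witness.
Context {C : numClosedFieldType} {d : nat}.

Local Notation opAB := (op C (('I_2 * 'I_d) * ('I_2 * 'I_d))%type).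

(* [witness M = 2 Tr((P_2 (x) 1) M) - d Tr((P_2 (x) P) M)], in the qubit|qudit order. *)
Definition witness (M : opAB) : C :=
  \sum_(s : ('I_2 * 'I_2)%type) \sum_(k : ('I_d * 'I_d)%type)
    (M ((s.1, k.1), (s.1, k.2)) ((s.2, k.1), (s.2, k.2))
     - 2^-1 * M ((s.1, k.1), (s.1, k.1)) ((s.2, k.2), (s.2, k.2))).

Definition kron_AB (X : op C ('I_2 * 'I_2)%type) (Y : op C ('I_d * 'I_d)%type) : opAB :=
  fun p q => kron _ _ _ X Y ((p.1.1, p.2.1), (p.1.2, p.2.2))
                            ((q.1.1, q.2.1), (q.1.2, q.2.2)).

Lemma witness_sum {K : Type} {r : seq K} {c : K -> C} {F : K -> opAB} {M : opAB} :
  (forall p q, M p q = \sum_(k <- r) c k * F k p q) ->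
  witness M = \sum_(k <- r) c k * witness (F k).
Proof.
move=> defM; rewrite /witness.
under eq_bigr do under eq_bigr do rewrite !defM mulr_sumr -sumrB.
under eq_bigr do rewrite exchange_big.
rewrite exchange_big; apply: eq_bigr => k _.
rewrite mulr_sumr; apply: eq_bigr => s _.
by rewrite mulr_sumr; apply: eq_bigr => t _; ring.
Qed.

Lemma witness_kron_AB X Y :
  witness (kron_AB X Y) = maxent_form X * (optrace Y - 2^-1 * maxent_form Y).
Proof.
rewrite /witness /maxent_form /optrace mulr_suml; apply: eq_bigr => s _.
rewrite mulrBr mulrA !mulr_sumr -sumrB; apply: eq_bigr => -[i j] _ /=.
by rewrite /kron_AB /kron /=; ring.
Qed.

Lemma witness_prod_ge0 (u w : 'I_2 * 'I_d -> C) :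
  0 <= witness (fun p q => u p.1 * w p.2 * (u q.1 * w q.2)^*).
Proof.
pose A i j := \sum_(s < 2) u (s, i) * w (s, j).
rewrite /witness; under eq_bigr do rewrite sumrB -mulr_sumr.
rewrite sumrB -mulr_sumr.
have -> : \sum_(s : ('I_2 * 'I_2)%type) \sum_(k : ('I_d * 'I_d)%type)
    u (s.1, k.1) * w (s.1, k.2) * (u (s.2, k.1) * w (s.2, k.2))^* =
    \sum_i \sum_j `|A i j| ^+ 2.
  rewrite [RHS]pair_big exchange_big; apply: eq_bigr => k _.
  by rewrite sqr_normC_sum.
have -> : \sum_(s : ('I_2 * 'I_2)%type) \sum_(k : ('I_d * 'I_d)%type)
    u (s.1, k.1) * w (s.1, k.1) * (u (s.2, k.2) * w (s.2, k.2))^* =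
    `|\sum_i A i i| ^+ 2.
  rewrite exchange_big sqr_normC_sum; apply: eq_bigr => s _.
  by rewrite rmorph_sum big_distrlr pair_big.
rewrite subr_ge0 ler_pdivrMl ?ltr0Sn //.
by apply: trace_rank2_le => i j; rewrite /A !big_ord_recl big_ord0 addr0.
Qed.

Lemma witness_kron_ge0 (A B : op C ('I_2 * 'I_d)%type) :
  psd C _ A -> psd C _ B -> 0 <= witness (kron _ _ _ A B).
Proof.
move=> /psd_rank1_decomp[na [u defA]] /psd_rank1_decomp[nb [w defB]].
pose F (kl : ('I_na * 'I_nb)%type) p q :=
  u kl.1 p.1 * w kl.2 p.2 * (u kl.1 q.1 * w kl.2 q.2)^*.
rewrite (@witness_sum _ (index_enum _) (fun=> 1) F) => [|p q].
  by apply: sumr_ge0 => kl _; rewrite mul1r witness_prod_ge0.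
rewrite /kron defA defB big_distrlr pair_big; apply: eq_bigr => kl _.
by rewrite /F mul1r rmorphM /=; ring.
Qed.

Lemma witness_rho x y z :
  (1 < d)%N -> witness (rho_AB C d x y z) = 2 * x + (2 - d%:R) * z.
Proof.
move=> d_gt1.
have rhoE p q : rho_AB C d x y z p q =
    \sum_(k <- [:: (1, kron_AB (Qtil C 2) (Qtil C d)); (x, kron_AB (Pmax C 2) (Qtil C d));
                 (y, kron_AB (Qtil C 2) (Pmax C d)); (z, kron_AB (Pmax C 2) (Pmax C d))])
      k.1 * k.2 p q.
  by rewrite !big_cons big_nil /= mul1r addr0 !addrA.
rewrite (witness_sum rhoE) !big_cons big_nil /= !witness_kron_AB.
rewrite maxent_form_Pmax // maxent_form_Qtil // maxent_form_Pmax ?(ltnW d_gt1) //.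
rewrite maxent_form_Qtil // optrace_Pmax ?(ltnW d_gt1) // optrace_Qtil //.
by field.
Qed.

End Witness.

Theorem mainTheorem4 (C : numClosedFieldType) (d : nat) (x y z : C) :
  (3 <= d)%N -> 0 <= x -> 0 <= y -> 0 <= z ->
  2 * x / (d%:R - 2) < z ->
  ~ separable C _ _ (rho_AB C d x y z).
Proof.
move=> d_ge3 _ _ _ z_gt [n [c [A [B [sep_psd sep_rho]]]]].
have : 0 <= witness (rho_AB C d x y z).
  rewrite (witness_sum sep_rho); apply: sumr_ge0 => k _.
  by have [c_ge0 [psdA psdB]] := sep_psd k; rewrite mulr_ge0 ?witness_kron_ge0.
have d2_gt0 : 0 < d%:R - 2 :> C by rewrite -(natrB _ (ltnW d_ge3)) ltr0n subn_gt0.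
rewrite ltr_pdivrMr // in z_gt.
by rewrite witness_rho 1?ltnW // -opprB mulNr subr_ge0 mulrC (lt_geF z_gt).
Qed.
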